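(* For all integers $m\ge1$, $r\ge0$ and $n\ge0$, $$\mathcal B_n(x)=\sum_{k=0}^n\sum_{l=k}^n\binom nl\,\mathcal B_{n-l}\,w_{m,r}(l,k)\,\mathcal D_{m,r}(k,x).$$
   Context: The Bernoulli polynomials are defined by $\sum_{n\ge0}\mathcal B_n(x)\frac{t^n}{n!}=\frac{te^{xt}}{e^t-1}$ and $\mathcal B_n:=\mathcal B_n(0)$. For integers $m\ge1$, $n,k,r\ge0$: the $r$-Whitney numbers of the first kind $w_{m,r}(n,k)$ are defined by $\sum_{n\ge k}w_{m,r}(n,k)\frac{z^n}{n!}=(1+mz)^{-r/m}\frac{\ln^k(1+mz)}{m^kk!}$; the $r$-Whitney numbers of the second kind $W_{m,r}(n,k)$ by $\sum_{n\ge k}W_{m,r}(n,k)\frac{z^n}{n!}=\frac{e^{rz}}{k!}\left(\frac{e^{mz}-1}{m}\right)^k$; and the $r$-Dowling polynomial is $\mathcal D_{m,r}(n,u):=\sum_{k=0}^nW_{m,r}(n,k)u^k$. *)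

(* Formal power series are represented by their coefficient
   sequences (nat -> R); all generating-function definitions of the paper are
   rendered literally as coefficient extraction from products of such series. *)
From HB Require Import structures.
From mathcomp Require Import all_boot all_order all_algebra.
Set Implicit Arguments. Unset Strict Implicit. Unset Printing Implicit Defensive.
Import Order.TTheory GRing.Theory Num.Theory.
Local Open Scope ring_scope.

Section FPS.
Variable R : numFieldType.

Definition fps := nat -> R.

Definition fps_one : fps := fun n => (n == 0%N)%:R.
Definition fps_mul (f g : fps) : fps :=
  fun n => \sum_(k < n.+1) f k * g (n - k)%N.
Definition fps_pow (f : fps) (k : nat) : fps := iter k (fps_mul f) fps_one.
Definition fps_scale (c : R) (f : fps) : fps := fun n => c * f n.
Definition fps_sub (f g : fps) : fps := fun n => f n - g n.

Definition fps_exp (a : R) : fps := fun n => a ^+ n / (n`!)%:R.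
Definition fps_log1p (a : R) : fps :=
  fun n => if n is n'.+1 then (-1) ^+ n' * a ^+ n / n%:R else 0.
Definition gbinom (b : R) (n : nat) : R := (\prod_(i < n) (b - i%:R)) / (n`!)%:R.
Definition fps_binpow (a b : R) : fps := fun n => gbinom b n * a ^+ n.

(* multiplicative inverse of a series with nonzero constant term:
   first n+1 coefficients computed by the usual recursion *)
Fixpoint fps_inv_seq (c : fps) (n : nat) : seq R :=
  match n with
  | 0%N => [:: (c 0%N)^-1]
  | n'.+1 =>
      let s := fps_inv_seq c n' in
      rcons s (- (c 0%N)^-1 * \sum_(k < n) nth 0 s k * c (n - k)%N)
  end.
Definition fps_inv (c : fps) : fps := fun n => nth 0 (fps_inv_seq c n) n.

Definition expm1_div_t : fps := fun n => 1 / ((n.+1)`!)%:R.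

(* sum_n B_n(x) t^n/n! = t e^{xt}/(e^t-1) = e^{xt} * ((e^t-1)/t)^{-1} *)
Definition bernpoly (n : nat) (x : R) : R :=
  (n`!)%:R * fps_mul (fps_exp x) (fps_inv expm1_div_t) n.
Definition bern (n : nat) : R := bernpoly n 0.

(* r-Whitney numbers of the first kind:
   sum_n w(n,k) z^n/n! = (1+mz)^{-r/m} ln^k(1+mz) / (m^k k!) *)
Definition whitney1 (m r n k : nat) : R :=
  (n`!)%:R * fps_mul (fps_binpow m%:R (- (r%:R / m%:R)))
                     (fps_pow (fps_log1p m%:R) k) n
  / (m%:R ^+ k * (k`!)%:R).

(* r-Whitney numbers of the second kind:
   sum_n W(n,k) z^n/n! = e^{rz}/k! ((e^{mz}-1)/m)^k *)
Definition whitney2 (m r n k : nat) : R :=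
  (n`!)%:R * fps_mul (fps_exp r%:R)
     (fps_pow (fps_scale (m%:R)^-1 (fps_sub (fps_exp m%:R) fps_one)) k) n
  / (k`!)%:R.

Definition dowling (m r n : nat) (u : R) : R :=
  \sum_(k < n.+1) whitney2 m r n k * u ^+ k.

End FPS.

From HB Require Import structures.
From mathcomp Require Import all_boot all_order all_algebra.
From mathcomp Require Import ring.
Import Order.TTheory GRing.Theory Num.Theory.
Local Open Scope ring_scope.
Set Implicit Arguments. Unset Strict Implicit.

(* The generating functions e^{rz} ((e^{mz} - 1)/m)^k and
   (1 + mz)^{-r/m} ln^k (1 + mz) satisfy first-order linear differential
   equations; comparing coefficients gives the triangular recurrences
     W(n+1, k) = W(n, k-1) + (r + mk) W(n, k),
     w(n+1, k) = w(n, k-1) - (r + mn) w(n, k),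
   which make the matrices (w(l, k)) and (W(k, j)) mutually inverse.  Hence
   x^l = sum_k w(l, k) D_{m,r}(k, x), and substituting this into the Appell
   expansion B_n(x) = sum_l C(n, l) B_{n-l} x^l gives the identity. *)

Section Truncation.
Variable R : numFieldType.
Implicit Types (f g : fps R) (p q : {poly R}).

(* Coefficients below N of products and powers of series are those of the
   polynomial truncations below N, so the derivative rules of {poly R} apply
   to series coefficientwise. *)
Definition fps_trunc (N : nat) f : {poly R} := \poly_(i < N) f i.
Definition fps_deriv f : fps R := fun i => f i.+1 *+ i.+1.

Lemma coef_fps_trunc N f i : (i < N)%N -> (fps_trunc N f)`_i = f i.
Proof. by move=> ltiN; rewrite coef_poly ltiN. Qed.

Lemma coef_deriv_fps_trunc N f i :
  (i.+1 < N)%N -> (fps_trunc N f)^`()`_i = fps_deriv f i.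
Proof. by move=> ltiN; rewrite coef_deriv coef_fps_trunc. Qed.

Lemma coefM_low p q p' q' n :
  (forall i, (i <= n)%N -> p`_i = p'`_i) ->
  (forall i, (i <= n)%N -> q`_i = q'`_i) -> (p * q)`_n = (p' * q')`_n.
Proof.
move=> eq_p eq_q; rewrite !coefM; apply: eq_bigr => -[i /= lt_in] _.
by rewrite eq_p // eq_q // leq_subr.
Qed.

Lemma fps_mul_trunc N f g n :
  (n < N)%N -> fps_mul f g n = (fps_trunc N f * fps_trunc N g)`_n.
Proof.
move=> ltnN; rewrite coefM; apply: eq_bigr => -[i /= lt_in] _.
have ltiN : (i < N)%N by apply: leq_ltn_trans ltnN; rewrite -ltnS.
by rewrite !coef_fps_trunc // (leq_ltn_trans (leq_subr i n) ltnN).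
Qed.

Lemma fps_pow_trunc N f k n :
  (n < N)%N -> fps_pow f k n = (fps_trunc N f ^+ k)`_n.
Proof.
elim: k n => [|k IHk] n ltnN; first by rewrite expr0 coef1.
rewrite exprS /fps_pow iterS -/(fps_pow f k) (fps_mul_trunc _ _ ltnN).
apply: coefM_low => // i le_in; have ltiN := leq_ltn_trans le_in ltnN.
by rewrite coef_fps_trunc // IHk.
Qed.

Lemma fps_mul_pow_trunc N f g k n : (n < N)%N ->
  fps_mul f (fps_pow g k) n = (fps_trunc N f * fps_trunc N g ^+ k)`_n.
Proof.
move=> ltnN; rewrite (fps_mul_trunc _ _ ltnN); apply: coefM_low => // i le_in.
have ltiN := leq_ltn_trans le_in ltnN.
by rewrite coef_fps_trunc // (fps_pow_trunc _ _ ltiN).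
Qed.

Lemma fps_mul_coef0 f g : fps_mul f g 0 = f 0%N * g 0%N.
Proof. by rewrite /fps_mul big_ord_recl big_ord0 addr0 subn0. Qed.

Lemma fps_pow_coef0 f k : fps_pow f k 0 = f 0%N ^+ k.
Proof.
elim: k => [|k IHk]; first by rewrite expr0.
by rewrite /fps_pow iterS fps_mul_coef0 -/(fps_pow f k) IHk exprS.
Qed.

Lemma coef_mul_deriv_mul_pow (Q E G : {poly R}) (a b c : R) k n :
  (forall i, (i <= n)%N -> (Q * E^`())`_i = a * E`_i) ->
  (forall i, (i <= n)%N -> (Q * G^`())`_i = (i == 0)%:R * b + c * G`_i) ->
  (Q * (E * G ^+ k)^`())`_n =
    (a + c *+ k) * (E * G ^+ k)`_n + (E * G ^+ k.-1)`_n * b *+ k.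
Proof.
move=> dE dG.
have -> : Q * (E * G ^+ k)^`() =
    Q * E^`() * G ^+ k + E * G ^+ k.-1 *+ k * (Q * G^`()).
  by rewrite derivM deriv_exp; ring.
have eE : (Q * E^`() * G ^+ k)`_n = (a%:P * E * G ^+ k)`_n.
  by apply: coefM_low => // i /dE ->; rewrite coefCM.
have eG : (E * G ^+ k.-1 *+ k * (Q * G^`()))`_n =
    (E * G ^+ k.-1 *+ k * (b%:P + c%:P * G))`_n.
  apply: coefM_low => // i /dG ->; rewrite coefD coefCM coefC.
  by case: eqP; rewrite ?mul1r ?mul0r.
rewrite coefD eE eG -coefD.
have -> : a%:P * E * G ^+ k + E * G ^+ k.-1 *+ k * (b%:P + c%:P * G) =
    (a + c *+ k)%:P * (E * G ^+ k) + E * G ^+ k.-1 * b%:P *+ k.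
  by case: k {eE eG} => [|k]; rewrite polyCD polyCMn ?exprS /=; ring.
by rewrite coefD coefCM coefMn coefMC.
Qed.

Lemma coef_linear_mul_deriv (c : R) p i :
  ((1 + c%:P * 'X) * p^`())`_i = p`_i.+1 *+ i.+1 + c * (p`_i *+ i).
Proof.
rewrite mulrDl mul1r coefD -mulrA coefCM coefXM !coef_deriv.
by case: i => [|i] /=; rewrite ?mulr0n ?mulr0.
Qed.

Lemma coef_linear_mul_deriv_fps_trunc N (c : R) f i : (i.+1 < N)%N ->
  ((1 + c%:P * 'X) * (fps_trunc N f)^`())`_i = fps_deriv f i + c * (f i *+ i).
Proof.
by move=> ltiN; rewrite coef_linear_mul_deriv !coef_fps_trunc // ltnW.
Qed.

End Truncation.

Section SeriesDerivatives.
Variable R : numFieldType.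

Lemma natr_fact_neq0 k : (k`!)%:R != 0 :> R.
Proof. by rewrite pnatr_eq0 -lt0n fact_gt0. Qed.

Lemma fps_deriv_exp (a : R) i : fps_deriv (fps_exp a) i = a * fps_exp a i.
Proof.
rewrite /fps_deriv /fps_exp factS natrM -mulr_natr exprS.
by field; rewrite natr_fact_neq0 nat1r pnatr_eq0.
Qed.

Definition fps_expm1_div (a : R) : fps R :=
  fps_scale a^-1 (fps_sub (fps_exp a) (fps_one R)).

Lemma fps_deriv_expm1_div (a : R) i : a != 0 ->
  fps_deriv (fps_expm1_div a) i = (i == 0)%:R + a * fps_expm1_div a i.
Proof.
move=> a_neq0; rewrite /fps_expm1_div /fps_deriv /fps_scale /fps_sub /fps_one.
rewrite mulr0n subr0 -mulrnAr -/(fps_deriv (fps_exp a) i) fps_deriv_exp.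
by rewrite !mulrA mulVf // mulfV // !mul1r addrC subrK.
Qed.

Lemma gbinomS (b : R) i : gbinom b i.+1 = gbinom b i * (b - i%:R) / i.+1%:R.
Proof.
rewrite /gbinom big_ord_recr factS natrM /=.
by field; rewrite natr_fact_neq0 nat1r pnatr_eq0.
Qed.

Lemma fps_deriv_binpow (a b : R) i :
  fps_deriv (fps_binpow a b) i + a * (fps_binpow a b i *+ i) =
  a * b * fps_binpow a b i.
Proof.
rewrite /fps_deriv /fps_binpow gbinomS exprS.
by field; rewrite nat1r pnatr_eq0.
Qed.

Lemma fps_deriv_log1p (a : R) i :
  fps_deriv (fps_log1p a) i + a * (fps_log1p a i *+ i) = (i == 0)%:R * a.
Proof.
rewrite /fps_deriv /fps_log1p; case: i => [|i].
  by rewrite mulr0n mulr0 addr0 expr0 expr1 mul1r divr1.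
rewrite [_ == _]/= mul0r [_ ^+ i.+2]exprS [(-1) ^+ i.+1]exprS.
by field; rewrite nat1r -natrD !pnatr_eq0.
Qed.

End SeriesDerivatives.

Section WhitneyRecurrences.
Variables (R : numFieldType) (m r : nat).
Hypothesis m_gt0 : (0 < m)%N.

Let m_neq0 : m%:R != 0 :> R.
Proof. by rewrite pnatr_eq0 -lt0n. Qed.

Definition whitney1_series k : fps R :=
  fps_mul (fps_binpow m%:R (- (r%:R / m%:R))) (fps_pow (fps_log1p m%:R) k).
Definition whitney2_series k : fps R :=
  fps_mul (fps_exp r%:R) (fps_pow (fps_expm1_div m%:R) k).

Lemma whitney2_series_rec k n :
  whitney2_series k n.+1 *+ n.+1 =
  (r%:R + m%:R * k%:R) * whitney2_series k n + whitney2_series k.-1 n *+ k.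
Proof.
rewrite /whitney2_series !(@fps_mul_pow_trunc _ n.+2) //.
rewrite -coef_deriv -[_^`()]mul1r (@coef_mul_deriv_mul_pow _ _ _ _ r%:R 1 m%:R).
- by rewrite mulr1 mulr_natr.
- move=> i le_in; rewrite mul1r coef_deriv_fps_trunc ?ltnS //.
  by rewrite fps_deriv_exp coef_fps_trunc // ltnS leqW.
- move=> i le_in; rewrite mul1r coef_deriv_fps_trunc ?ltnS //.
  by rewrite fps_deriv_expm1_div // coef_fps_trunc ?mulr1 // ltnS leqW.
Qed.

Lemma whitney1_series_rec k n :
  whitney1_series k n.+1 *+ n.+1 + m%:R * (whitney1_series k n *+ n) =
  - r%:R * whitney1_series k n + whitney1_series k.-1 n * m%:R *+ k.
Proof.
rewrite /whitney1_series !(@fps_mul_pow_trunc _ n.+2) //.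
rewrite -coef_linear_mul_deriv.
rewrite (@coef_mul_deriv_mul_pow _ _ _ _ (- r%:R) m%:R 0) ?mul0rn ?addr0 //.
- move=> i le_in; rewrite coef_linear_mul_deriv_fps_trunc ?ltnS //.
  rewrite fps_deriv_binpow coef_fps_trunc ?ltnS ?leqW //.
  by rewrite mulrN (mulrCA m%:R) mulfV // mulr1.
- move=> i le_in; rewrite coef_linear_mul_deriv_fps_trunc ?ltnS //.
  by rewrite fps_deriv_log1p mul0r addr0.
Qed.

Lemma whitney1E n k :
  whitney1 R m r n k = n`!%:R * whitney1_series k n / (m%:R ^+ k * k`!%:R).
Proof. by []. Qed.

Lemma whitney2E n k :
  whitney2 R m r n k = n`!%:R * whitney2_series k n / k`!%:R.
Proof. by []. Qed.

Lemma whitney1S n k :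
  whitney1 R m r n.+1 k =
  (if k is k'.+1 then whitney1 R m r n k' else 0) -
  (r%:R + m%:R * n%:R) * whitney1 R m r n k.
Proof.
have -> : whitney1 R m r n.+1 k =
    n`!%:R * (whitney1_series k n.+1 *+ n.+1) / (m%:R ^+ k * k`!%:R).
  by rewrite whitney1E factS natrM; ring.
rewrite -(addrK (m%:R * (whitney1_series k n *+ n)) (_ *+ n.+1)).
rewrite whitney1_series_rec !whitney1E.
case: k => [|k]; first by rewrite mulr0n addr0; ring.
have := natr_fact_neq0 R k; rewrite whitney1E factS natrM exprS => kf_neq0.
by field; rewrite kf_neq0 m_neq0 expf_neq0 // nat1r pnatr_eq0.
Qed.

Lemma whitney2S n k :
  whitney2 R m r n.+1 k =
  (if k is k'.+1 then whitney2 R m r n k' else 0) +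
  (r%:R + m%:R * k%:R) * whitney2 R m r n k.
Proof.
have -> : whitney2 R m r n.+1 k =
    n`!%:R * (whitney2_series k n.+1 *+ n.+1) / k`!%:R.
  by rewrite whitney2E factS natrM; ring.
rewrite whitney2_series_rec !whitney2E.
case: k => [|k]; first by rewrite mulr0n addr0 add0r; ring.
have := natr_fact_neq0 R k; rewrite whitney2E factS natrM => kf_neq0.
by field; rewrite kf_neq0 nat1r pnatr_eq0.
Qed.

Lemma whitney1_0 k : whitney1 R m r 0 k = (k == 0)%:R.
Proof.
rewrite whitney1E /whitney1_series fps_mul_coef0 fps_pow_coef0 /fps_binpow.
rewrite /gbinom big_ord0 /fps_log1p fact0 mulr1n expr0 !divr1 !mul1r.
case: k => [|k]; last by rewrite exprS !mul0r.
by rewrite !expr0 !mul1r fact0 mulr1n invr1.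
Qed.

Lemma whitney2_0 k : whitney2 R m r 0 k = (k == 0)%:R.
Proof.
rewrite whitney2E /whitney2_series fps_mul_coef0 fps_pow_coef0 /fps_expm1_div.
rewrite /fps_scale /fps_sub /fps_exp /fps_one !fact0 !expr0 eqxx !mulr1n.
rewrite !divr1 subrr mulr0 !mul1r.
case: k => [|k]; last by rewrite exprS !mul0r.
by rewrite expr0 fact0 divr1.
Qed.

End WhitneyRecurrences.

Section TriangularInversion.
Variables (R : comRingType) (c : nat -> R) (w W : nat -> nat -> R).
Hypothesis w0 : forall k, w 0%N k = (k == 0%N)%:R.
Hypothesis wS :
  forall l k, w l.+1 k = (if k is k'.+1 then w l k' else 0) - c l * w l k.
Hypothesis W0 : forall k, W 0%N k = (k == 0%N)%:R.
Hypothesis WS :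
  forall n k, W n.+1 k = (if k is k'.+1 then W n k' else 0) + c k * W n k.

Lemma w_small n k : (n < k)%N -> w n k = 0.
Proof.
elim: n k => [|n IHn] [|k] ltnk //.
by rewrite wS !IHn ?mulr0 ?subr0 // ltnW.
Qed.

Lemma W_small n k : (n < k)%N -> W n k = 0.
Proof.
elim: n k => [|n IHn] [|k] ltnk //.
by rewrite WS !IHn ?mulr0 ?addr0 // ltnW.
Qed.

Lemma sum_wW l j N : (l < N)%N -> \sum_(k < N) w l k * W k j = (l == j)%:R.
Proof.
rewrite -(big_mkord xpredT (fun k => w l k * W k j)).
elim: l j N => [|l IHl] j [|N] // ltlN.
  rewrite big_nat_recl // w0 W0 mul1r eq_sym big1_seq ?addr0 // => k _.
  by rewrite w0 mul0r.
have shifted : \sum_(0 <= k < N) w l k * W k.+1 j =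
    (l.+1 == j)%:R + c j * (l == j)%:R.
  under eq_bigr do rewrite WS mulrDr mulrCA.
  rewrite big_split -mulr_sumr IHl //; case: j => [|j] /=; last by rewrite IHl.
  by rewrite big1_seq // => k _; rewrite mulr0.
under eq_bigr do rewrite wS mulrBl -mulrA.
rewrite sumrB -mulr_sumr IHl ?(ltnW ltlN) //.
rewrite big_nat_recl //= mul0r add0r shifted.
by case: (l =P j) => [<-|_]; rewrite ?addrK // !mulr0 subr0 addr0.
Qed.

End TriangularInversion.

Section Bernoulli.
Variable R : numFieldType.

Lemma bernE n : bern R n = n`!%:R * fps_inv (expm1_div_t R) n.
Proof.
rewrite /bern /bernpoly /fps_mul big_ord_recl /fps_exp expr0 fact0 divr1 mul1r.
by rewrite subn0 big1 ?addr0 // => i _; rewrite exprS !mul0r.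
Qed.

Lemma bernpoly_expansion n (x : R) :
  bernpoly n x = \sum_(l < n.+1) 'C(n, l)%:R * bern R (n - l) * x ^+ l.
Proof.
rewrite /bernpoly /fps_mul mulr_sumr; apply: eq_bigr => -[l /= lt_ln] _.
rewrite bernE /fps_exp -{1}(bin_fact (lt_ln : (l <= n)%N)) !natrM.
have := natr_fact_neq0 R l; have := natr_fact_neq0 R (n - l).
by move=> nlf_neq0 lf_neq0; field; rewrite lf_neq0.
Qed.

End Bernoulli.

Section WhitneyInversion.
Variables (R : numFieldType) (m r : nat) (x : R).
Hypothesis m_gt0 : (0 < m)%N.

Let c k : R := r%:R + m%:R * k%:R.

Lemma whitney1_small l k : (l < k)%N -> whitney1 R m r l k = 0.
Proof. exact: (w_small (c := c) (whitney1_0 R m r) (whitney1S R r m_gt0)). Qed.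

Lemma whitney2_small n k : (n < k)%N -> whitney2 R m r n k = 0.
Proof. exact: (W_small (c := c) (whitney2_0 R m r) (whitney2S R r m_gt0)). Qed.

Lemma sum_whitney1_whitney2 l j N : (l < N)%N ->
  \sum_(k < N) whitney1 R m r l k * whitney2 R m r k j = (l == j)%:R.
Proof.
exact: (sum_wW (c := c) (whitney1_0 R m r) (whitney1S R r m_gt0)
  (whitney2_0 R m r) (whitney2S R r m_gt0)).
Qed.

Lemma dowling_widen k N :
  (k < N)%N -> dowling m r k x = \sum_(j < N) whitney2 R m r k j * x ^+ j.
Proof.
move=> ltkN; rewrite /dowling.
rewrite (big_ord_widen _ (fun j => whitney2 R m r k j * x ^+ j) ltkN).
rewrite big_mkcond; apply: eq_bigr => j _.
by case: ltnP => // lekj; rewrite whitney2_small ?mul0r.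
Qed.

Lemma expr_dowling l N : (l < N)%N ->
  x ^+ l = \sum_(k < N) whitney1 R m r l k * dowling m r k x.
Proof.
move=> ltlN.
under eq_bigr => k _ do rewrite (dowling_widen (ltn_ord k)) mulr_sumr.
rewrite exchange_big /=.
under eq_bigr => j _ do (under eq_bigr do rewrite mulrA;
  rewrite -mulr_suml (sum_whitney1_whitney2 _ ltlN)).
rewrite (bigD1 (Ordinal ltlN)) //= eqxx mul1r big1 ?addr0 // => j ne_jl.
by move/negbTE: ne_jl; rewrite -val_eqE eq_sym => /= ->; rewrite mul0r.
Qed.

End WhitneyInversion.

Unset Implicit Arguments.
Theorem mainTheorem14 (R : numFieldType) (m r n : nat) (x : R) :
  (1 <= m)%N ->
  bernpoly n x =
  \sum_(k < n.+1) \sum_(k <= l < n.+1)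
     ('C(n, l))%:R * bern R (n - l) * whitney1 R m r l k * dowling m r k x.
Proof.
move=> m_gt0.
pose F l k :=
  'C(n, l)%:R * bern R (n - l) * whitney1 R m r l k * dowling m r k x.
have full_range (k : 'I_n.+1) :
    \sum_(k <= l < n.+1) F l k = \sum_(l < n.+1) F l k.
  rewrite big_geq_mkord big_mkcond; apply: eq_bigr => l _.
  by case: leqP => // ltlk; rewrite /F whitney1_small // mulr0 mul0r.
rewrite (eq_bigr _ (fun k _ => full_range k)) exchange_big bernpoly_expansion.
apply: eq_bigr => l _; rewrite (expr_dowling r x m_gt0 (ltn_ord l)) mulr_sumr.
by apply: eq_bigr => k _; rewrite /F mulrA.
Qed.
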